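(* For every integer $p\ge 3$, $${\rm gp}(S_p^2)=\begin{cases}\frac{(p+1)^2}{4}, & p\text{ odd},\\ \frac{p(p+2)}{4}, & p\text{ even},\end{cases}\qquad \#{\rm gp}(S_p^2)=\begin{cases}\binom{p}{(p+1)/2}, & p\text{ odd},\\ \binom{p+1}{(p+2)/2}, & p\text{ even}.\end{cases}$$
   Context: For $p\ge3$, $n\ge1$, the Sierpiński graph $S_p^n$ has vertex set $\{0,1,\dots,p-1\}^n$, a vertex written $i_1\cdots i_n$; vertices $i_1\cdots i_n$ and $j_1\cdots j_n$ are adjacent iff there is $h$ with $i_t=j_t$ for $t<h$, $i_h\ne j_h$, and $i_t=j_h$, $j_t=i_h$ for $t>h$. For $X\subseteq V(G)$, vertices $u,v$ are $X$-positionable if every shortest $u,v$-path $P$ satisfies $V(P)\cap X\subseteq\{u,v\}$; $X$ is a general position set if every two vertices of $X$ are $X$-positionable; ${\rm gp}(G)$ is the maximum size of a general position set and $\#{\rm gp}(G)$ the number of general position sets of that size. *)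

From mathcomp Require Import all_boot.
Set Implicit Arguments. Unset Strict Implicit. Unset Printing Implicit Defensive.

(* Vertices of the Sierpinski graph S_p^n: words i_1 ... i_n over {0,..,p-1},
   encoded as n-tuples of 'I_p (position h : 'I_n is letter i_{h+1}). *)
Definition sierp_vertex (p n : nat) := (n.-tuple 'I_p)%type.

Definition sierp_adj (p n : nat) : rel (sierp_vertex p n) :=
  fun u v => [exists h : 'I_n,
    [&& [forall t : 'I_n, (t < h) ==> (tnth u t == tnth v t)],
        tnth u h != tnth v h &
        [forall t : 'I_n, (h < t) ==> ((tnth u t == tnth v h) && (tnth v t == tnth u h))]]].

Arguments sierp_adj : clear implicits.

Section GP.
Variables (V : finType) (adj : rel V).

(* A u,v-walk is given as the sequence s of vertices after u: u :: s,
   consecutive vertices adjacent, ending at v. A shortest u,v-path is such a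
   walk of minimum length (necessarily a path). *)
Definition shortest_path (u v : V) (s : seq V) : Prop :=
  [/\ path adj u s, last u s = v &
      forall s' : seq V, path adj u s' -> last u s' = v -> size s <= size s'].

Definition positionable (X : {set V}) (u v : V) : Prop :=
  forall s, shortest_path u v s ->
    forall x, x \in u :: s -> x \in X -> x = u \/ x = v.

Definition gp_set (X : {set V}) : Prop :=
  forall u v, u \in X -> v \in X -> u != v -> positionable X u v.

Definition gp_number_is (k : nat) : Prop :=
  (exists X, gp_set X /\ #|X| = k) /\ (forall X, gp_set X -> #|X| <= k).

Definition num_gp_sets_is (k c : nat) : Prop :=
  exists F : {set {set V}},
    (forall X, X \in F <-> gp_set X /\ #|X| = k) /\ #|F| = c.
End GP.

From mathcomp Require Import all_boot zify.
Set Implicit Arguments. Unset Strict Implicit. Unset Printing Implicit Defensive.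

(* A general position set X of S_p^2 cannot contain ia, ij and jb with i <> j
   and a <> j: the endpoint ij of the bridge edge ij -- ji between the copies i
   and j lies on a shortest ia,jb-path.  So if C is the set of copies met by X,
   every copy i in C carrying two vertices of X carries only vertices ia with
   a = i or a outside C, whence |X| <= |C| (p + 1 - |C|).  Conversely these sets
   are in general position for every C, because two of their vertices in
   different copies are at distance 3 and any third one is strictly off every
   geodesic.  The bound is maximal exactly for |C| = (p+1)/2 (p odd) or
   |C| in {p/2, p/2 + 1} (p even); there p + 1 - |C| > 1, so every copy of C is
   filled as above and a maximum gp-set is determined by C, which gives the
   count. *)

Section WalkDistance.
Variables (V : finType) (adj : rel V) (d : V -> V -> nat).
Hypothesis d_refl : forall u, d u u = 0.
Hypothesis d_adj : forall u x y, adj x y -> d u y <= (d u x).+1.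

Lemma dist_last_le u w s : path adj w s -> d u (last w s) <= d u w + size s.
Proof.
elim: s w => [|x s IH] w /=; first by rewrite addn0.
case/andP => wx xs; apply: leq_trans (IH _ xs) _.
by rewrite addnS -addSn leq_add2r d_adj.
Qed.

Lemma dist_walk_le u s : path adj u s -> d u (last u s) <= size s.
Proof. by move/(dist_last_le u); rewrite d_refl. Qed.

Lemma dist_mid_le u v x s :
  path adj u s -> last u s = v -> x \in s -> d u x + d x v <= size s.
Proof.
move=> + + xs; case/splitPr: xs => s1 s2; rewrite cat_path last_cat size_cat /=.
case/and3P=> us1 s1x xs2 <-.
have le1 : d u x <= (size s1).+1.
  by rewrite -(size_rcons s1 x) -{1}(last_rcons u s1 x) dist_walk_le // rcons_path us1.
by rewrite addnS -addSn leq_add // dist_walk_le.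
Qed.

Lemma shortest_path_dist u v s :
  path adj u s -> last u s = v -> size s = d u v -> shortest_path adj u v s.
Proof. by move=> us sv sd; split=> // s' us' s'v; rewrite sd -s'v dist_walk_le. Qed.

(* A third point x of X on a shortest u,v-path would give d u x + d x v <= d u v. *)
Lemma gp_set_strict_triangle (X : {set V}) :
  (forall u v, u \in X -> v \in X -> exists s,
     [/\ path adj u s, last u s = v & size s = d u v]) ->
  (forall u v x, u \in X -> v \in X -> x \in X ->
     u != v -> x != u -> x != v -> d u v < d u x + d x v) ->
  gp_set adj X.
Proof.
move=> walkX strictX u v uX vX uv s [us sv smin] x; rewrite inE.
case: eqP => [-> _ _|/eqP xu /= xs xX]; first by left.
case: (eqVneq x v) => [->|xv]; first by right.
have [s' [us' s'v s'd]] := walkX u v uX vX.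
have := dist_mid_le us sv xs; have := smin s' us' s'v.
by have := strictX u v x uX vX xX uv xu xv; lia.
Qed.

End WalkDistance.

Lemma ord2P (t : 'I_2) : t = ord0 \/ t = ord_max.
Proof. by case: t => [[|[|//]] lt_t2]; [left|right]; apply: val_inj. Qed.

Lemma forall_ord2 (P : pred 'I_2) : [forall t, P t] = P ord0 && P ord_max.
Proof.
apply/forallP/andP => [P_all|[P0 P1] t]; first by split; apply: P_all.
by case: (ord2P t) => ->.
Qed.

Lemma exists_ord2 (P : pred 'I_2) : [exists t, P t] = P ord0 || P ord_max.
Proof.
apply/existsP/orP => [[t]|[P0|P1]]; [|by exists ord0|by exists ord_max].
by case: (ord2P t) => -> Pt; [left|right].
Qed.

Section SierpinskiTwo.
Variable p : nat.
Local Notation V := (sierp_vertex p 2).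
Local Notation adj := (sierp_adj p 2).

Definition vtx (i a : 'I_p) : V := [tuple i; a].
Definition copy_of (v : V) : 'I_p := tnth v ord0.
Definition inner_of (v : V) : 'I_p := tnth v ord_max.

Lemma copy_of_vtx i a : copy_of (vtx i a) = i. Proof. by []. Qed.
Lemma inner_of_vtx i a : inner_of (vtx i a) = a. Proof. by []. Qed.

Lemma vtx_eta v : v = vtx (copy_of v) (inner_of v).
Proof. by apply: eq_from_tnth => t; case: (ord2P t) => ->. Qed.

Lemma vtxP v : exists i a, v = vtx i a.
Proof. by exists (copy_of v), (inner_of v); apply: vtx_eta. Qed.

Lemma eq_vtx i a j b : (vtx i a == vtx j b) = (i == j) && (a == b).
Proof.
apply/eqP/andP => [E|[/eqP -> /eqP ->]] //.
by rewrite -(copy_of_vtx i a) -(inner_of_vtx i a) E.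
Qed.

Lemma vtx_inj i : injective (vtx i).
Proof. by move=> a b /eqP; rewrite eq_vtx eqxx => /eqP. Qed.

Lemma adj_vtx i a j b :
  adj (vtx i a) (vtx j b) = (i == j) && (a != b) || [&& i != j, a == j & b == i].
Proof.
rewrite /sierp_adj exists_ord2 !forall_ord2 /=.
case: (i =P j) => [->|/eqP ij]; case: (a =P j) => [->|/eqP aj];
  case: (b =P i) => [->|/eqP bi]; rewrite ?eqxx ?andbT ?andbF ?orbF //=.
Qed.

(* Between distinct copies i and j every path crosses the bridge edge ij -- ji. *)
Definition sdist (u v : V) : nat :=
  if copy_of u == copy_of v then (inner_of u != inner_of v : nat)
  else (inner_of u != copy_of v) + 1 + (inner_of v != copy_of u).

Definition geodesic (u v : V) : seq V :=
  if copy_of u == copy_of v then (if inner_of u == inner_of v then [::] else [:: v])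
  else (if inner_of u == copy_of v then [::] else [:: vtx (copy_of u) (copy_of v)])
       ++ vtx (copy_of v) (copy_of u) :: (if inner_of v == copy_of u then [::] else [:: v]).

Lemma sdist_vtx i a j b :
  sdist (vtx i a) (vtx j b) = if i == j then a != b : nat else (a != j) + 1 + (b != i).
Proof. by []. Qed.

Lemma geodesicP u v :
  [/\ path adj u (geodesic u v), last u (geodesic u v) = v
    & size (geodesic u v) = sdist u v].
Proof.
case: (vtxP u) (vtxP v) => i [a ->] [j [b ->]].
rewrite /geodesic /sdist !copy_of_vtx !inner_of_vtx.
case: (eqVneq i j) => [<-|ij].
  by case: eqVneq => [<-|ab]; split; rewrite //= adj_vtx eqxx ab.
case: (eqVneq a j) => [->|aj]; case: (eqVneq b i) => [->|bi];
  by split; rewrite /= ?adj_vtx ?eqxx ?(eq_sym i b) ?ij ?aj ?bi ?orbT.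
Qed.

Lemma sdist_refl u : sdist u u = 0.
Proof. by rewrite /sdist !eqxx. Qed.

Lemma sdist_adj u x y : adj x y -> sdist u y <= (sdist u x).+1.
Proof.
case: (vtxP u) (vtxP x) (vtxP y) => i [a ->] [k [c ->]] [l [e ->]].
rewrite adj_vtx !sdist_vtx; case/orP => [/andP [/eqP <- _]|/and3P [kl /eqP -> /eqP ->]].
  by case: (i == k); lia.
by case: (eqVneq i l); case: (eqVneq i k); lia.
Qed.

Lemma shortest_geodesic u v : shortest_path adj u v (geodesic u v).
Proof.
by have [? ? ?] := geodesicP u v; apply: (shortest_path_dist sdist_refl sdist_adj).
Qed.

(* ij is on the geodesic from ia to jb. *)
Lemma gp_set_bridge (X : {set V}) i a j b :
  gp_set adj X -> vtx i a \in X -> vtx i j \in X -> vtx j b \in X ->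
  i != j -> a != j -> False.
Proof.
move=> gpX iaX ijX jbX ij aj.
have uv : vtx i a != vtx j b by rewrite eq_vtx (negbTE ij).
have ij_geo : vtx i j \in vtx i a :: geodesic (vtx i a) (vtx j b).
  by rewrite /geodesic !copy_of_vtx !inner_of_vtx (negbTE ij) (negbTE aj) !inE eqxx orbT.
have [/eqP|/eqP] := gpX _ _ iaX jbX uv _ (shortest_geodesic _ _) _ ij_geo ijX.
  by rewrite eq_vtx eqxx eq_sym (negbTE aj).
by rewrite eq_vtx (negbTE ij).
Qed.

Definition row (X : {set V}) (i : 'I_p) : {set 'I_p} := [set a | vtx i a \in X].
Definition occupied (X : {set V}) : {set 'I_p} := [set i | [exists a, vtx i a \in X]].

Lemma card_rows (X : {set V}) : #|X| = \sum_i #|row X i|.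
Proof.
rewrite -sum1_card (partition_big copy_of predT) //=; apply: eq_bigr => i _.
rewrite -(card_imset _ (@vtx_inj i)) -sum1_card; apply: eq_bigl => v /=.
apply/andP/imsetP => [[vX /eqP <-]|[a aX ->]].
  by exists (inner_of v); rewrite ?inE -vtx_eta.
by move: aX; rewrite inE copy_of_vtx.
Qed.

Lemma eq_rows (X Y : {set V}) : (forall i, row X i = row Y i) -> X = Y.
Proof.
move=> XY; apply/setP => v; rewrite (vtx_eta v).
by move/setP/(_ (inner_of v)): (XY (copy_of v)); rewrite !inE.
Qed.

Lemma row_notin_occupied (X : {set V}) i : i \notin occupied X -> row X i = set0.
Proof.
rewrite inE negb_exists => /forallP iX; apply/setP => a.
by rewrite !inE (negbTE (iX a)).
Qed.

Lemma card_setU1C (C : {set 'I_p}) i : i \in C -> #|i |: ~: C| = p.+1 - #|C|.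
Proof.
move=> iC; rewrite cardsU1 inE iC /=.
by have := cardsC C; rewrite card_ord; move: #|~: C| #|C| => n m <-; lia.
Qed.

Lemma card_set_ord_le (C : {set 'I_p}) : #|C| <= p.
Proof. by rewrite -[X in _ <= X]card_ord max_card. Qed.

Lemma row_subset (X : {set V}) i :
  gp_set adj X -> 1 < #|row X i| -> row X i \subset i |: ~: occupied X.
Proof.
move=> gpX row2; apply/subsetP => a aXi; rewrite !inE.
case: (eqVneq a i) => //= ai; apply/existsP => -[b abX].
have : 0 < #|row X i :\ a| by move: row2; rewrite (cardsD1 a) aXi.
rewrite card_gt0 => /set0Pn [a' /setD1P [a'a a'Xi]].
move: aXi a'Xi; rewrite !inE => aXi a'Xi.
by apply: (gp_set_bridge gpX a'Xi aXi abX); rewrite // eq_sym.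
Qed.

Lemma card_row_le (X : {set V}) i : gp_set adj X ->
  #|row X i| <= if i \in occupied X then p.+1 - #|occupied X| else 0.
Proof.
move=> gpX; case: ifPn => iX; last by rewrite row_notin_occupied ?cards0.
case: (leqP #|row X i| 1) => [row1|row2]; last first.
  by rewrite -(card_setU1C iX) subset_leq_card ?row_subset.
by apply: (leq_trans row1); rewrite subn_gt0 ltnS card_set_ord_le.
Qed.

Lemma sum_nat_cond_const (C : {set 'I_p}) K :
  \sum_(i < p) (if i \in C then K else 0) = #|C| * K.
Proof. by rewrite -big_mkcond sum_nat_const. Qed.

Lemma card_gp_set_le (X : {set V}) :
  gp_set adj X -> #|X| <= #|occupied X| * (p.+1 - #|occupied X|).
Proof. by move=> gpX; rewrite card_rows -sum_nat_cond_const leq_sum // => i _; apply: card_row_le. Qed.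

Definition gp_of_copies (C : {set 'I_p}) : {set V} :=
  [set v | (copy_of v \in C) && (inner_of v \in copy_of v |: ~: C)].

Lemma row_gp_of_copies C i :
  row (gp_of_copies C) i = if i \in C then i |: ~: C else set0.
Proof.
by apply/setP => a; rewrite !inE copy_of_vtx inner_of_vtx; case: (i \in C); rewrite !inE.
Qed.

Lemma card_gp_of_copies C : #|gp_of_copies C| = #|C| * (p.+1 - #|C|).
Proof.
rewrite card_rows -sum_nat_cond_const; apply: eq_bigr => i _.
by rewrite row_gp_of_copies; case: ifP => iC; rewrite ?card_setU1C ?cards0.
Qed.

Lemma gp_of_copies_inj : injective gp_of_copies.
Proof.
move=> C D CD; apply/setP => i.
by move/setP/(_ (vtx i i)): CD; rewrite !inE copy_of_vtx inner_of_vtx eqxx !andbT.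
Qed.

Lemma gp_set_extremal (X : {set V}) :
  gp_set adj X -> #|X| = #|occupied X| * (p.+1 - #|occupied X|) ->
  1 < p.+1 - #|occupied X| -> X = gp_of_copies (occupied X).
Proof.
move=> gpX cardX row2.
have [_] := leqif_sum (fun i (_ : true) => leqif_eq (card_row_le i gpX)).
rewrite -card_rows sum_nat_cond_const -cardX eqxx => /esym/forallP rowX.
apply: eq_rows => i; rewrite row_gp_of_copies; case: ifPn => iC.
  have /eqP cardXi := rowX i; rewrite iC in cardXi.
  by apply/eqP; rewrite eqEcard row_subset ?card_setU1C ?cardXi ?leqnn.
by rewrite row_notin_occupied.
Qed.

Lemma sdist_gt0 u v : u != v -> 0 < sdist u v.
Proof.
case: (vtxP u) (vtxP v) => i [a ->] [j [b ->]].
by rewrite eq_vtx sdist_vtx; case: (i == j); rewrite /= ?lt0b ?addn1.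
Qed.

Lemma sdist_same_copy u v : copy_of u = copy_of v -> sdist u v <= 1.
Proof. by rewrite /sdist => ->; rewrite eqxx leq_b1. Qed.

Lemma copy_of_gp_of_copies C v : v \in gp_of_copies C -> copy_of v \in C.
Proof. by rewrite inE => /andP []. Qed.

Lemma inner_of_gp_of_copies C v :
  v \in gp_of_copies C -> inner_of v \in C -> inner_of v = copy_of v.
Proof. by rewrite !inE => /andP [_ /orP [/eqP //|/negP]]. Qed.

Lemma sdist_gp_of_copies C u v : u \in gp_of_copies C -> v \in gp_of_copies C ->
  copy_of u != copy_of v -> sdist u v = 3.
Proof.
move=> uC vC uv; rewrite [u]vtx_eta [v]vtx_eta sdist_vtx (negbTE uv).
suff [-> ->] : inner_of u != copy_of v /\ inner_of v != copy_of u by [].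
split; apply: contraNneq uv => E.
  by rewrite -(inner_of_gp_of_copies uC) E ?copy_of_gp_of_copies.
by rewrite -(inner_of_gp_of_copies vC) E ?copy_of_gp_of_copies.
Qed.

Lemma gp_of_copies_strict C u v x :
  u \in gp_of_copies C -> v \in gp_of_copies C -> x \in gp_of_copies C ->
  u != v -> x != u -> x != v -> sdist u v < sdist u x + sdist x v.
Proof.
move=> uC vC xC uv xu xv.
have ux_gt0 : 0 < sdist u x by rewrite sdist_gt0 // eq_sym.
have xv_gt0 := sdist_gt0 xv.
case: (eqVneq (copy_of u) (copy_of v)) => [/sdist_same_copy|uv_copy]; first lia.
rewrite (sdist_gp_of_copies uC vC uv_copy).
case: (eqVneq (copy_of x) (copy_of u)) => [xu_copy|xu_copy].
  by rewrite (sdist_gp_of_copies xC vC) ?xu_copy //; lia.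
by rewrite (sdist_gp_of_copies uC xC) 1?eq_sym //; lia.
Qed.

Lemma gp_set_gp_of_copies C : gp_set adj (gp_of_copies C).
Proof.
apply: (gp_set_strict_triangle sdist_refl sdist_adj) => [u v _ _|]; last exact: gp_of_copies_strict.
by exists (geodesic u v); apply: geodesicP.
Qed.

End SierpinskiTwo.

Definition gp_sierp2 (p : nat) : nat :=
  if odd p then p.+1 ^ 2 %/ 4 else p * p.+2 %/ 4.

(* The sizes m of occupied copies maximising m * (p + 1 - m). *)
Definition optimal_copies (p m : nat) : bool :=
  if odd p then m == p.+1 %/ 2 else (m == p %/ 2) || (m == p.+2 %/ 2).

Lemma prod_le_gp_sierp2 p m : m <= p -> m * (p.+1 - m) <= gp_sierp2 p.
Proof.
rewrite /gp_sierp2; have := odd_double_half p.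
case: (odd p) => /= <-; move: p./2 => q mp.
  have -> : (1 + q.*2).+1 ^ 2 %/ 4 = q.+1 * q.+1 by lia.
  by case: (leqP m q.+1); nia.
have -> : q.*2 * (q.*2).+2 %/ 4 = q * q.+1 by lia.
by case: (leqP m q); nia.
Qed.

Lemma prod_eq_gp_sierp2 p m :
  m <= p -> (m * (p.+1 - m) == gp_sierp2 p) = optimal_copies p m.
Proof.
rewrite /gp_sierp2 /optimal_copies; have := odd_double_half p.
case: (odd p) => /= <-; move: p./2 => q mp.
  have -> : (1 + q.*2).+1 ^ 2 %/ 4 = q.+1 * q.+1 by lia.
  have -> : (1 + q.*2).+1 %/ 2 = q.+1 by lia.
  apply/eqP/eqP => [|->]; last by lia.
  by case: (ltngtP m q.+1) => //; nia.
have -> : q.*2 * (q.*2).+2 %/ 4 = q * q.+1 by lia.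
have -> : (q.*2).+2 %/ 2 = q.+1 by lia.
have -> : q.*2 %/ 2 = q by lia.
apply/eqP/orP => [|[/eqP->|/eqP->]]; try lia.
by case: (ltngtP m q) => [||->]; [nia| |by left]; case: (ltngtP m q.+1) => [||->]; [nia|nia|right].
Qed.

Lemma optimal_copies_gap p m : 3 <= p -> optimal_copies p m -> 1 < p.+1 - m.
Proof.
rewrite /optimal_copies; have := odd_double_half p; case: (odd p) => /= <-.
  by move=> p3 /eqP ->; lia.
by move=> p3 /orP [] /eqP ->; lia.
Qed.

Lemma card_optimal_copies p :
  #|[set C : {set 'I_p} | optimal_copies p #|C|]| =
    if odd p then 'C(p, p.+1 %/ 2) else 'C(p.+1, p.+2 %/ 2).
Proof.
rewrite /optimal_copies; case: (odd p); first by rewrite card_draws card_ord.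
rewrite (_ : [set C : {set 'I_p} | _] =
    [set C : {set 'I_p} | #|C| == p %/ 2] :|: [set C : {set 'I_p} | #|C| == p.+2 %/ 2]).
  rewrite cardsU !card_draws card_ord.
  have -> : p.+2 %/ 2 = (p %/ 2).+1 by lia.
  rewrite (_ : _ :&: _ = set0) ?cards0 ?subn0 ?binS 1?addnC //.
  by apply/setP => C; rewrite !inE; apply/negP => /andP [/eqP -> /eqP]; lia.
by apply/setP => C; rewrite !inE.
Qed.

Section MaximumGpSets.
Variable p : nat.
Local Notation adj := (sierp_adj p 2).

Lemma card_gp_set_le_gp_sierp2 X : gp_set adj X -> #|X| <= gp_sierp2 p.
Proof. by move/card_gp_set_le/leq_trans; apply; rewrite prod_le_gp_sierp2 ?card_set_ord_le. Qed.

Lemma card_gp_of_copies_optimal (C : {set 'I_p}) :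
  optimal_copies p #|C| -> #|gp_of_copies C| = gp_sierp2 p.
Proof. by rewrite -prod_eq_gp_sierp2 ?card_set_ord_le // card_gp_of_copies => /eqP. Qed.

Lemma maximum_gp_set_gp_of_copies X : 3 <= p -> gp_set adj X -> #|X| = gp_sierp2 p ->
  exists2 C : {set 'I_p}, optimal_copies p #|C| & X = gp_of_copies C.
Proof.
move=> p3 gpX cardX; have occ_le := card_set_ord_le (occupied X).
have cardX' : #|X| = #|occupied X| * (p.+1 - #|occupied X|).
  by apply/eqP; rewrite eqn_leq card_gp_set_le // cardX prod_le_gp_sierp2.
have occ_opt : optimal_copies p #|occupied X| by rewrite -prod_eq_gp_sierp2 // -cardX' cardX.
exists (occupied X) => //.
exact: gp_set_extremal gpX cardX' (optimal_copies_gap p3 occ_opt).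
Qed.

End MaximumGpSets.

Theorem corollary3p2 (p : nat) (hp : 3 <= p) :
  let k := if odd p then (p.+1 ^ 2) %/ 4 else (p * p.+2) %/ 4 in
  let c := if odd p then 'C(p, p.+1 %/ 2) else 'C(p.+1, p.+2 %/ 2) in
  gp_number_is (sierp_adj p 2) k /\ num_gp_sets_is (sierp_adj p 2) k c.
Proof.
rewrite /= -/(gp_sierp2 p) -card_optimal_copies.
set optimal := [set C : {set 'I_p} | optimal_copies p #|C|].
have max_gp C : C \in optimal ->
    gp_set (sierp_adj p 2) (gp_of_copies C) /\ #|gp_of_copies C| = gp_sierp2 p.
  by rewrite inE => optC; split; [apply: gp_set_gp_of_copies | apply: card_gp_of_copies_optimal].
split.
  split; last exact: card_gp_set_le_gp_sierp2.
  have : 0 < #|optimal| by rewrite card_optimal_copies; case: odd; rewrite bin_gt0; lia.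
  by case/card_gt0P => C /max_gp; exists (gp_of_copies C).
exists (@gp_of_copies p @: optimal); split.
  move=> X; split => [/imsetP [C /max_gp gpC ->] //|[gpX cardX]].
  have [C optC ->] := maximum_gp_set_gp_of_copies hp gpX cardX.
  by apply: imset_f; rewrite inE.
by rewrite card_imset ?card_optimal_copies //; apply: gp_of_copies_inj.
Qed.
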